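(* Let $\beta>0$, $\tilde\sigma\in[0,1)$ and $(\tau,\theta)\in\mathcal R_{\tilde\sigma}$. Define the $2m\times 2m$ matrix $$Q=\begin{bmatrix}(3-3\tau-2\tilde\sigma)\beta I&2(1-\tau-\tilde\sigma)I\\ 2(1-\tau-\tilde\sigma)I&\frac{4-\tau-\theta-2\tilde\sigma}{\beta}I\end{bmatrix}$$ and the scalar $\vartheta=\sqrt{(3-3\tau-2\tilde\sigma)(4-\tau-\theta-2\tilde\sigma)}-2(1-\tau-\tilde\sigma)$. Then $Q$ is symmetric positive definite and $\vartheta>0$. Moreover, for any $(y,\gamma)\in\mathbb{R}^m\times\mathbb{R}^m$, $\|(y,\gamma)\|_Q^2\ge-2\vartheta\langle y,\gamma\rangle$.
   Context: $I$ is the $m\times m$ identity; $\|z\|_Q=\sqrt{\langle Qz,z\rangle}$. $\mathcal R_{\tilde\sigma}:=\{(\tau,\theta):\tau\in(-1,1-\tilde\sigma),\ \tau+\theta>0,\ (1-\tau^2)(2-\tau-\theta-\tilde\sigma)-(1-\theta)^2(1-\tau-\tilde\sigma)>0\}$. *)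

From HB Require Import structures.
From mathcomp Require Import all_boot all_order all_algebra.
Set Implicit Arguments. Unset Strict Implicit. Unset Printing Implicit Defensive.
Import Order.TTheory GRing.Theory Num.Theory.
Local Open Scope ring_scope.

Definition inner (R : rcfType) (n : nat) (u v : 'cV[R]_n) : R := (u^T *m v) 0 0.

Definition normQ2 (R : rcfType) (n : nat) (Q : 'M[R]_n) (z : 'cV[R]_n) : R :=
  inner (Q *m z) z.

Definition sym_posdef (R : rcfType) (n : nat) (Q : 'M[R]_n) : Prop :=
  Q^T = Q /\ forall z : 'cV[R]_n, z != 0 -> 0 < inner (Q *m z) z.

Definition region (R : rcfType) (s tau theta : R) : Prop :=
  [/\ -1 < tau, tau < 1 - s, 0 < tau + theta &
      0 < (1 - tau ^+ 2) * (2 - tau - theta - s)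
          - (1 - theta) ^+ 2 * (1 - tau - s)].

Definition Qmat (R : rcfType) (m : nat) (beta s tau theta : R) : 'M[R]_(m + m) :=
  block_mx (((3 - 3 * tau - 2 * s) * beta)%:M) ((2 * (1 - tau - s))%:M)
           ((2 * (1 - tau - s))%:M) (((4 - tau - theta - 2 * s) / beta)%:M).

Definition vartheta (R : rcfType) (s tau theta : R) : R :=
  Num.sqrt ((3 - 3 * tau - 2 * s) * (4 - tau - theta - 2 * s)) - 2 * (1 - tau - s).

(** With [a = 3 - 3 tau - 2 s], [c = 2 (1 - tau - s)], [d = 4 - tau - theta - 2 s],
    the matrix [Q] is the Gram matrix of the scalar form
    [F(y, g) = a beta |y|^2 + 2 c <y, g> + (d / beta) |g|^2].
    The region condition forces the discriminant to be negative,
    [c^2 < a d], and then completing the square,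
    [a beta F = |a beta y + c g|^2 + (a d - c^2) |g|^2], gives positive
    definiteness, while [c < sqrt (a d)] gives [vartheta > 0]. Finally
    [F + 2 vartheta <y, g> = |sqrt (a beta) y + sqrt (d / beta) g|^2 >= 0]. *)

From HB Require Import structures.
From mathcomp Require Import all_boot all_order all_algebra.
From mathcomp Require Import lra ring.
Import Order.TTheory GRing.Theory Num.Theory.
Set Implicit Arguments.
Unset Strict Implicit.
Unset Printing Implicit Defensive.

Local Open Scope ring_scope.

Lemma region_discriminant (R : rcfType) (s tau theta : R) :
  0 <= s -> region s tau theta ->
  (2 * (1 - tau - s)) ^+ 2 < (3 - 3 * tau - 2 * s) * (4 - tau - theta - 2 * s).
Proof.
move=> s_ge0 [tau_gtN1 tau_lt _ region_ineq].
have u_gt0 : 0 < 1 - tau - s by lra.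
have tau2_lt1 : 0 < 1 - tau ^+ 2.
  have : 0 < (1 - tau) * (1 + tau) by apply: mulr_gt0; lra.
  lra.
rewrite -subr_gt0.
have -> : (3 - 3 * tau - 2 * s) * (4 - tau - theta - 2 * s) - (2 * (1 - tau - s)) ^+ 2
    = 4 * (1 - tau - s) + (1 - tau ^+ 2)
      + (1 - theta) * (2 * (1 - tau - s) + (1 - tau)) by ring.
have [theta_le1 | theta_gt1] := lerP theta 1.
  have : 0 <= (1 - theta) * (2 * (1 - tau - s) + (1 - tau)) by apply: mulr_ge0; lra.
  lra.
(* With [p = theta - 1 > 0] and [u = 1 - tau - s], the region condition reads
   [(1 - tau^2) (u - p) > p^2 u]; hence [p < u] and [p < 1], so [p (2 u + 1 - tau) < 4 u]. *)
have p_gt0 : 0 < theta - 1 by rewrite subr_gt0.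
have p2u_gt0 : 0 < (1 - theta) ^+ 2 * (1 - tau - s).
  by rewrite -sqrrN opprB mulr_gt0 ?exprn_gt0.
have : 0 < (1 - tau ^+ 2) * (1 - tau - s - (theta - 1)) by lra.
rewrite pmulr_rgt0 // => p_lt_u.
have p2_lt1 : (theta - 1) ^+ 2 < 1 by nra.
have p_lt1 : theta - 1 < 1 by nra.
nra.
Qed.

Section InnerProduct.
Context {R : rcfType} {n : nat}.
Implicit Types (a b : R) (u v w : 'cV[R]_n).

Lemma innerE u v : inner u v = \sum_i u i 0 * v i 0.
Proof. by rewrite /inner mxE; apply: eq_bigr => i _; rewrite mxE. Qed.

Lemma innerC u v : inner u v = inner v u.
Proof. by rewrite !innerE; apply: eq_bigr => i _; rewrite mulrC. Qed.

Lemma innerDZl a b u v w :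
  inner (a *: u + b *: v) w = a * inner u w + b * inner v w.
Proof.
rewrite !innerE !mulr_sumr -big_split; apply: eq_bigr => i _.
by rewrite !mxE mulrDl !mulrA.
Qed.

Lemma inner_comb a b u v :
  inner (a *: u + b *: v) (a *: u + b *: v)
  = a ^+ 2 * inner u u + 2 * a * b * inner u v + b ^+ 2 * inner v v.
Proof. by rewrite innerDZl !(innerC _ (a *: u + b *: v)) !innerDZl (innerC v u); ring. Qed.

Lemma inner_ge0 u : 0 <= inner u u.
Proof. by rewrite innerE sumr_ge0 // => i _; rewrite -expr2 sqr_ge0. Qed.

Lemma inner0r u : inner u 0 = 0.
Proof. by rewrite /inner mulmx0 mxE. Qed.

Lemma inner_eq0 u : (inner u u == 0) = (u == 0).
Proof.
apply/idP/eqP => [|->]; last by rewrite inner0r.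
rewrite innerE psumr_eq0 => [/allP u0|i _]; last by rewrite -expr2 sqr_ge0.
apply/matrixP => i j; rewrite ord1 mxE.
by apply/eqP; rewrite -sqrf_eq0 expr2; exact: u0 i (mem_index_enum _).
Qed.

Lemma inner_gt0 u : u != 0 -> 0 < inner u u.
Proof. by move=> u_neq0; rewrite lt_def inner_eq0 u_neq0 inner_ge0. Qed.

End InnerProduct.

Section ScalarBlockForm.
Variables (R : rcfType) (m : nat) (a c d : R).

Definition scalar_block_mx : 'M[R]_(m + m) := block_mx a%:M c%:M c%:M d%:M.

Lemma scalar_block_mx_sym : scalar_block_mx^T = scalar_block_mx.
Proof. by rewrite /scalar_block_mx tr_block_mx !tr_scalar_mx. Qed.

Lemma normQ2_scalar_block (y g : 'cV[R]_m) :
  normQ2 scalar_block_mx (col_mx y g)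
  = a * inner y y + 2 * c * inner y g + d * inner g g.
Proof.
rewrite /normQ2 /scalar_block_mx mul_block_col !mul_scalar_mx /inner.
rewrite tr_col_mx mul_row_col mxE -!/(inner _ _) !innerDZl (innerC g y); ring.
Qed.

Lemma normQ2_scalar_block_gt0 (y g : 'cV[R]_m) :
  0 < a -> c ^+ 2 < a * d -> col_mx y g != 0 ->
  0 < normQ2 scalar_block_mx (col_mx y g).
Proof.
move=> a_gt0 discr_lt0 yg_neq0; rewrite normQ2_scalar_block.
have [g0 | g_neq0] := eqVneq g 0.
  have y_neq0 : y != 0 by apply: contraNneq yg_neq0 => ->; rewrite g0 col_mx0.
  by rewrite g0 !inner0r !mulr0 !addr0 pmulr_rgt0 // inner_gt0.
rewrite -(pmulr_rgt0 _ a_gt0).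
have -> : a * (a * inner y y + 2 * c * inner y g + d * inner g g)
    = inner (a *: y + c *: g) (a *: y + c *: g) + (a * d - c ^+ 2) * inner g g.
  by rewrite inner_comb; ring.
by rewrite ltr_wpDl ?inner_ge0 // mulr_gt0 ?subr_gt0 ?inner_gt0.
Qed.

Lemma scalar_block_posdef : 0 < a -> c ^+ 2 < a * d -> sym_posdef scalar_block_mx.
Proof.
move=> a_gt0 discr_lt0; split=> [|z z_neq0]; first exact: scalar_block_mx_sym.
rewrite -[z]vsubmxK; apply: normQ2_scalar_block_gt0; rewrite ?vsubmxK //.
Qed.

Lemma normQ2_scalar_block_ge (y g : 'cV[R]_m) : 0 <= a -> 0 <= d ->
  - 2 * (Num.sqrt (a * d) - c) * inner y g <= normQ2 scalar_block_mx (col_mx y g).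
Proof.
move=> a_ge0 d_ge0; rewrite normQ2_scalar_block sqrtrM //.
have := inner_ge0 (Num.sqrt a *: y + Num.sqrt d *: g).
rewrite inner_comb !sqr_sqrtr //; lra.
Qed.

End ScalarBlockForm.

Theorem proposition2p5 (R : rcfType) (m : nat) (beta s tau theta : R) :
  0 < beta -> 0 <= s -> s < 1 -> region s tau theta ->
  [/\ sym_posdef (Qmat m beta s tau theta),
      0 < vartheta s tau theta &
      forall y g : 'cV[R]_m,
        normQ2 (Qmat m beta s tau theta) (col_mx y g)
          >= - 2 * vartheta s tau theta * inner y g].
Proof.
move=> beta_gt0 s_ge0 _ reg; have discr := region_discriminant s_ge0 reg.
case: reg => tau_gtN1 tau_lt _ _.
set a := 3 - 3 * tau - 2 * s in discr *; set c := 2 * (1 - tau - s) in discr *.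
set d := 4 - tau - theta - 2 * s in discr *.
have a_gt0 : 0 < a by rewrite /a; lra.
have c_gt0 : 0 < c by rewrite /c; lra.
have d_gt0 : 0 < d by rewrite -(pmulr_rgt0 _ a_gt0); exact: le_lt_trans (sqr_ge0 c) discr.
have -> : Qmat m beta s tau theta = scalar_block_mx m (a * beta) c (d / beta) by [].
have ad_eq : a * beta * (d / beta) = a * d by rewrite mulrACA divff ?gt_eqF ?mulr1.
rewrite /vartheta -/a -/c -/d -ad_eq; split.
- by apply: scalar_block_posdef; rewrite ?ad_eq ?mulr_gt0.
- by rewrite subr_gt0 -(gtr0_norm c_gt0) -sqrtr_sqr ltr_sqrt ad_eq ?mulr_gt0.
- by move=> y g; apply: normQ2_scalar_block_ge; apply/ltW; rewrite ?divr_gt0 ?mulr_gt0.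
Qed.
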